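(* Let $A$ be a commutative noetherian local ring, let $x,y\in A$ be a regular exact pair of zero divisors, and let $a\in A$ be weakly regular on the $A$-module $A/(x,y)$. Then there are isomorphisms of $A$-algebras $\operatorname{End}_A(G_a)\cong A\cong \operatorname{End}_A(H_a)$. In particular, $\operatorname{End}_A(G_a)$ and $\operatorname{End}_A(H_a)$ are commutative noetherian local rings, and the $A$-modules $G_a$ and $H_a$ are indecomposable.
   Context: Two non-units $x,y\in A$ form an exact pair of zero divisors if $\operatorname{Ann}_A(x)=(y)$ and $\operatorname{Ann}_A(y)=(x)$; such a pair is regular if $(x)\cap(y)=0$. An element $a\in A$ is weakly regular on a module $M$ if multiplication by $a$ on $M$ is injective. For $a\in A$, let $\gamma_a=\begin{pmatrix} x & a\\ 0 & y\end{pmatrix}$ and $\eta_a=\begin{pmatrix} y & -a\\ 0 & x\end{pmatrix}$, viewed as $A$-linear maps $A^2\to A^2$ acting on column vectors, and set $G_a=\operatorname{Coker}\gamma_a$, $H_a=\operatorname{Coker}\eta_a$. *)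

(* Modules over A are handled concretely: the cokernel of a
   2x2 matrix g is A^2 (column vectors) modulo the image of g (setoid style). *)
From mathcomp Require Import all_boot all_algebra.
Set Implicit Arguments. Unset Strict Implicit. Unset Printing Implicit Defensive.
Import GRing.Theory.
Local Open Scope ring_scope.

Section RingNotions.
Variable A : comRingType.

Definition is_unit (x : A) : Prop := exists u, u * x = 1.
Definition is_ideal (I : A -> Prop) : Prop :=
  I 0 /\ (forall u v, I u -> I v -> I (u + v)) /\ (forall r u, I u -> I (r * u)).
Definition fin_gen_ideal (I : A -> Prop) : Prop :=
  exists s : seq A, forall z,
    I z <-> exists c : 'I_(size s) -> A, z = \sum_(i < size s) c i * s`_i.
Definition noetherian_ring : Prop :=
  forall I, is_ideal I -> fin_gen_ideal I.
Definition maximal_ideal (I : A -> Prop) : Prop :=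
  is_ideal I /\ ~ I 1 /\
  (forall J, is_ideal J -> (forall z, I z -> J z) -> ~ J 1 -> forall z, J z -> I z).
Definition local_ring : Prop :=
  exists m, maximal_ideal m /\ forall m', maximal_ideal m' -> forall z, m' z <-> m z.

Definition pid (x z : A) : Prop := exists r, z = r * x.
Definition ideal2 (x y z : A) : Prop := exists r s, z = r * x + s * y.
Definition ann (x z : A) : Prop := z * x = 0.

Definition exact_pair_zd (x y : A) : Prop :=
  ~ is_unit x /\ ~ is_unit y /\
  (forall z, ann x z <-> pid y z) /\ (forall z, ann y z <-> pid x z).
Definition regular_exact_pair (x y : A) : Prop :=
  exact_pair_zd x y /\ (forall z, pid x z -> pid y z -> z = 0).
Definition weakly_regular_quot2 (a x y : A) : Prop :=
  forall b, ideal2 x y (a * b) -> ideal2 x y b.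

Definition mx22 (p q r s : A) : 'M[A]_2 :=
  \matrix_(i < 2, j < 2)
    if (i == 0 :> nat) then (if (j == 0 :> nat) then p else q)
    else (if (j == 0 :> nat) then r else s).
Definition gamma_mx (x y a : A) : 'M[A]_2 := mx22 x a 0 y.
Definition eta_mx (x y a : A) : 'M[A]_2 := mx22 y (- a) 0 x.

Definition im_mx (g : 'M[A]_2) (v : 'cV[A]_2) : Prop := exists w, v = g *m w.
Definition coker_eq (g : 'M[A]_2) (u v : 'cV[A]_2) : Prop := im_mx g (u - v).

Definition vfun := 'cV[A]_2 -> 'cV[A]_2.

(* A-linear endomorphisms of Coker g, given on representatives *)
Definition is_coker_endo (g : 'M[A]_2) (f : vfun) : Prop :=
  (forall u v, coker_eq g u v -> coker_eq g (f u) (f v)) /\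
  (forall u v, coker_eq g (f (u + v)) (f u + f v)) /\
  (forall r u, coker_eq g (f (r *: u)) (r *: f u)).
Definition endo_eq (g : 'M[A]_2) (f h : vfun) : Prop :=
  forall u, coker_eq g (f u) (h u).
Definition struct_map (r : A) : vfun := fun u => r *: u.

Definition End_struct_iso (g : 'M[A]_2) : Prop :=
  (forall r, is_coker_endo g (struct_map r)) /\
  (forall r s, endo_eq g (struct_map r) (struct_map s) -> r = s) /\
  (forall f, is_coker_endo g f -> exists r, endo_eq g f (struct_map r)).

(* ring structure of End: + pointwise, * = composition, 1 = id *)
Definition End_comm (g : 'M[A]_2) : Prop :=
  forall f h, is_coker_endo g f -> is_coker_endo g h -> endo_eq g (f \o h) (h \o f).
Definition End_ideal (g : 'M[A]_2) (I : vfun -> Prop) : Prop :=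
  (forall f, I f -> is_coker_endo g f) /\
  (forall f h, I f -> endo_eq g f h -> I h) /\
  I (fun _ => 0) /\
  (forall f h, I f -> I h -> I (fun u => f u + h u)) /\
  (forall f h, is_coker_endo g f -> I h -> I (f \o h) /\ I (h \o f)).
Definition End_noetherian (g : 'M[A]_2) : Prop :=
  forall I, End_ideal g I ->
  exists s : seq vfun,
    (forall i : 'I_(size s), is_coker_endo g (nth (fun _ => 0) s i)) /\
    forall f, I f <->
      exists c : 'I_(size s) -> vfun,
        (forall i, is_coker_endo g (c i)) /\
        endo_eq g f (fun u => \sum_(i < size s) c i (nth (fun _ => 0) s i u)).
Definition End_maximal_ideal (g : 'M[A]_2) (I : vfun -> Prop) : Prop :=
  End_ideal g I /\ ~ I id /\
  (forall J, End_ideal g J -> (forall f, I f -> J f) -> ~ J id ->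
     forall f, J f -> I f).
Definition End_local (g : 'M[A]_2) : Prop :=
  exists m, End_maximal_ideal g m /\
    forall m', End_maximal_ideal g m' -> forall f, m' f <-> m f.

(* submodules of Coker g (as saturated predicates on representatives) *)
Definition coker_submod (g : 'M[A]_2) (M : 'cV[A]_2 -> Prop) : Prop :=
  (forall u v, coker_eq g u v -> M u -> M v) /\ M 0 /\
  (forall u v, M u -> M v -> M (u + v)) /\ (forall r u, M u -> M (r *: u)).
Definition coker_sub_zero (g : 'M[A]_2) (M : 'cV[A]_2 -> Prop) : Prop :=
  forall u, M u -> coker_eq g u 0.
Definition coker_indecomposable (g : 'M[A]_2) : Prop :=
  (exists u, ~ coker_eq g u 0) /\
  forall M N, coker_submod g M -> coker_submod g N ->
    (forall u, exists m n, M m /\ N n /\ coker_eq g u (m + n)) ->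
    (forall u, M u -> N u -> coker_eq g u 0) ->
    coker_sub_zero g M \/ coker_sub_zero g N.

Definition End_conclusions (g : 'M[A]_2) : Prop :=
  End_struct_iso g /\ End_comm g /\ End_noetherian g /\ End_local g /\
  coker_indecomposable g.

End RingNotions.

(* The structure map A -> End_A(G_a) is bijective; everything else is transported
   from A.  An endomorphism f of G_a = A^2 / im gamma_a is given by the images
   (p, q), (r, s) of the basis vectors e1, e2, subject to the relations x e1 = 0 and
   a e1 + y e2 = 0 of G_a.  Using Ann x = (y), Ann y = (x), (x) :&: (y) = 0 and the
   weak regularity of a on A/(x, y), these relations force f to be multiplication by
   c = s + b y, where p - a q' - s = alpha x + b y and q = q' y.  Faithfulness is the
   same computation: c e1, c e2 in im gamma_a puts c in (x) :&: (y).  Ideals of End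
   then correspond to ideals of A, and a direct sum decomposition of G_a gives an
   idempotent of the local ring A, which must be 0 or 1.  H_a is G_a for the pair
   (y, x) and -a. *)

From Stdlib Require Import Classical ClassicalEpsilon.
From mathcomp Require Import all_boot all_algebra ring.
Set Implicit Arguments. Unset Strict Implicit. Unset Printing Implicit Defensive.
Import GRing.Theory.
Local Open Scope ring_scope.

Section NoetherianLocal.
Variable A : comRingType.
Hypothesis noethA : noetherian_ring A.

Lemma ideal_sum (I : A -> Prop) n (F : 'I_n -> A) :
  is_ideal I -> (forall i, I (F i)) -> I (\sum_i F i).
Proof. by case=> I0 [ID _] IF; apply: big_ind. Qed.

Lemma span_sub_ideal (J K : A -> Prop) (s : seq A) : is_ideal K ->
  (forall z, J z <-> exists c : 'I_(size s) -> A, z = \sum_(i < size s) c i * s`_i) ->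
  (forall i : 'I_(size s), K s`_i) -> forall z, J z -> K z.
Proof.
move=> idK spanJ Ks z /spanJ [c ->]; apply: ideal_sum => // i.
by case: idK => _ [_ KM]; apply: KM.
Qed.

Lemma span_mem_gen (J : A -> Prop) (s : seq A) :
  (forall z, J z <-> exists c : 'I_(size s) -> A, z = \sum_(i < size s) c i * s`_i) ->
  forall i : 'I_(size s), J s`_i.
Proof.
move=> spanJ i; apply/spanJ; exists (fun j => (j == i)%:R).
rewrite (bigD1 i) //= eqxx mul1r big1 ?addr0 // => j /negbTE ->; by rewrite mul0r.
Qed.

Lemma noetherian_chain_stationary (C : nat -> A -> Prop) :
  (forall n, is_ideal (C n)) -> (forall n z, C n z -> C n.+1 z) ->
  exists N, forall n z, C n z -> C N z.
Proof.
move=> idC incC.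
have monoC n m z : (n <= m)%N -> C n z -> C m z.
  by move=> /subnK <-; elim: (m - n)%N => // k IH /IH; apply: incC.
pose U z := exists n, C n z.
have idU : is_ideal U.
  split; [|split].
  - by exists 0%N; case: (idC 0%N).
  - move=> u v [n Cu] [m Cv]; exists (maxn n m); case: (idC (maxn n m)) => _ [CD _].
    by apply: CD; [apply: monoC (leq_maxl n m) Cu | apply: monoC (leq_maxr n m) Cv].
  - by move=> r u [n Cu]; exists n; case: (idC n) => _ [_ CM]; apply: CM.
have [s spanU] := noethA idU.
have [N CN] : exists N, forall z, z \in s -> C N z.
  have Us z : z \in s -> U z.
    by case/(nthP 0) => i lt_i <-; apply: (span_mem_gen spanU (Ordinal lt_i)).
  elim: s Us {spanU} => [|b l IH] Us; first by exists 0%N.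
  have [N CN] := IH (fun z lz => Us z (mem_behead (s := b :: l) lz)).
  have [n Cb] := Us b (mem_head _ _).
  exists (maxn N n) => z; rewrite in_cons => /orP [/eqP -> | /CN].
    exact: monoC (leq_maxr N n) Cb.
  exact: monoC (leq_maxl N n).
exists N => n z Cz; apply: (span_sub_ideal (idC N) spanU) => [i|]; last by exists n.
exact/CN/mem_nth.
Qed.

(* Noetherianity replaces Zorn's lemma: otherwise choice would build a strictly
   increasing chain of proper ideals. *)
Lemma exists_maximal_ideal_over (I : A -> Prop) :
  is_ideal I -> ~ I 1 -> exists M, maximal_ideal M /\ forall z, I z -> M z.
Proof.
move=> idI nI1; apply: NNPP => noM.
pose proper_over (J : A -> Prop) := is_ideal J /\ ~ J 1 /\ forall z, I z -> J z.
pose strictly_above (J K : A -> Prop) :=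
  proper_over K /\ (forall z, J z -> K z) /\ exists z, K z /\ ~ J z.
have grow J : proper_over J -> exists K, strictly_above J K.
  move=> [idJ [nJ1 IJ]]; apply: NNPP => noK; apply: noM; exists J.
  split => //; split => //; split => // K idK JK nK1 z Kz; apply: NNPP => nJz; apply: noK.
  exists K; split; first by split => //; split => // t /IJ /JK.
  by split => //; exists z.
pose next J := epsilon (inhabits J) (strictly_above J).
pose C n := iter n next I.
have C_proper n : proper_over (C n).
  elim: n => [|n IH]; first by do 2!split => //.
  exact: (epsilon_spec _ _ (grow _ IH)).1.
have C_next n : strictly_above (C n) (C n.+1) := epsilon_spec _ _ (grow _ (C_proper n)).
have [N CN] := noetherian_chain_stationary (fun n => (C_proper n).1)
  (fun n => (C_next n).2.1).
by have [_ [_ [z [Cz nCz]]]] := C_next N; apply/nCz/CN/Cz.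
Qed.

Lemma pid_is_ideal (z : A) : is_ideal (pid z).
Proof.
split; [|split].
- by exists 0; rewrite mul0r.
- by move=> u v [r ->] [t ->]; exists (r + t); rewrite mulrDl.
- by move=> r u [t ->]; exists (r * t); rewrite mulrA.
Qed.

Lemma local_nonunit_max (m : A -> Prop) z :
  (forall m', maximal_ideal m' -> forall z, m' z <-> m z) -> ~ is_unit z -> m z.
Proof.
move=> uniq_m nu; have nz1 : ~ pid z 1 by move=> [r r_z]; apply: nu; exists r.
have [M [maxM zM]] := exists_maximal_ideal_over (pid_is_ideal z) nz1.
by apply/(uniq_m M maxM)/zM; exists 1; rewrite mul1r.
Qed.

Lemma local_idempotent (c : A) : local_ring A -> c * c = c -> c = 0 \/ c = 1.
Proof.
move=> [m [[[_ [mD _]] [m1 _]] uniq_m]] cc.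
have unit_or_max z : is_unit z \/ m z.
  by case: (classic (is_unit z)) => [|/(local_nonunit_max uniq_m)]; [left|right].
have [[u u_c]|mc] := unit_or_max c.
  right; apply/eqP; rewrite eq_sym -subr_eq0; apply/eqP.
  have -> : 1 - c = u * (c * (1 - c)) by rewrite mulrA u_c mul1r.
  by rewrite mulrBr mulr1 cc subrr mulr0.
have [[u u_c']|m_c'] := unit_or_max (1 - c); last first.
  by case: m1; rewrite -(subrK c 1); apply: mD.
left; have -> : c = u * ((1 - c) * c) by rewrite mulrA u_c' mul1r.
by rewrite mulrBl mul1r cc subrr mulr0.
Qed.

End NoetherianLocal.

Section TwoVectors.
Variable A : comRingType.

Definition col2 (p q : A) : 'cV[A]_2 := \col_(i < 2) (if i == 0 :> nat then p else q).

Lemma col2E (u : 'cV[A]_2) : u = col2 (u 0 0) (u 1 0).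
Proof.
apply/matrixP => i j; rewrite !mxE (ord1 j).
by case: i => [[|[|k]] lt_i] //=; congr (u _ _); apply: val_inj.
Qed.

Lemma col2_inj p q r s : col2 p q = col2 r s -> p = r /\ q = s.
Proof.
by move/matrixP => pqrs; split; [have := pqrs 0 0 | have := pqrs 1 0]; rewrite !mxE.
Qed.

Lemma mul_mx22_col2 p q r s c d :
  mx22 p q r s *m col2 c d = col2 (p * c + q * d) (r * c + s * d).
Proof.
apply/matrixP => i j; rewrite !mxE big_ord_recr big_ord1 /= !mxE /=.
by case: i => [[|[|k]] lt_i].
Qed.

Lemma col2D p q r s : col2 p q + col2 r s = col2 (p + r) (q + s).
Proof. by apply/matrixP => i j; rewrite !mxE; case: (i == 0 :> nat). Qed.
Lemma col2Z c p q : c *: col2 p q = col2 (c * p) (c * q).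
Proof. by apply/matrixP => i j; rewrite !mxE; case: (i == 0 :> nat). Qed.
Lemma col2B p q r s : col2 p q - col2 r s = col2 (p - r) (q - s).
Proof. by apply/matrixP => i j; rewrite !mxE; case: (i == 0 :> nat). Qed.

Lemma col2_basis (u : 'cV[A]_2) : u = u 0 0 *: col2 1 0 + u 1 0 *: col2 0 1.
Proof. by rewrite !col2Z col2D !mulr0 !mulr1 addr0 add0r -col2E. Qed.

End TwoVectors.

Section Cokernel.
Variables (A : comRingType) (g : 'M[A]_2).
Local Notation ceq := (coker_eq g).
Local Notation endo := (is_coker_endo g).
Local Notation eeq := (endo_eq g).
Local Notation st := (@struct_map A).

Lemma im_mx0 : im_mx g 0. Proof. by exists 0; rewrite mulmx0. Qed.
Lemma im_mxD u v : im_mx g u -> im_mx g v -> im_mx g (u + v).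
Proof. by move=> [w ->] [w' ->]; exists (w + w'); rewrite mulmxDr. Qed.
Lemma im_mxZ r u : im_mx g u -> im_mx g (r *: u).
Proof. by move=> [w ->]; exists (r *: w); rewrite scalemxAr. Qed.
Lemma im_mxN u : im_mx g u -> im_mx g (- u).
Proof. by move=> img_u; rewrite -scaleN1r; apply: im_mxZ. Qed.

Lemma coker_eq_refl u : ceq u u. Proof. by rewrite /coker_eq subrr; apply: im_mx0. Qed.
Lemma coker_eq_sym u v : ceq u v -> ceq v u.
Proof. by move=> /im_mxN; rewrite /coker_eq opprB. Qed.
Lemma coker_eq_trans u v w : ceq u v -> ceq v w -> ceq u w.
Proof. by move=> uv vw; have := im_mxD uv vw; rewrite /coker_eq addrA subrK. Qed.
Lemma coker_eqD u v u' v' : ceq u u' -> ceq v v' -> ceq (u + v) (u' + v').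
Proof. by move=> uu' vv'; have := im_mxD uu' vv'; rewrite /coker_eq opprD addrACA. Qed.
Lemma coker_eqZ r u v : ceq u v -> ceq (r *: u) (r *: v).
Proof. by move=> /(im_mxZ r); rewrite /coker_eq scalerBr. Qed.

Lemma endo_eq_sym f h : eeq f h -> eeq h f.
Proof. by move=> fh u; apply: coker_eq_sym. Qed.
Lemma endo_eq_trans f h k : eeq f h -> eeq h k -> eeq f k.
Proof. by move=> fh hk u; apply: coker_eq_trans (hk u). Qed.

Lemma struct_map_endo r : endo (st r).
Proof.
rewrite /struct_map; split; [|split] => [u v|u v|s u]; first exact: coker_eqZ.
  by rewrite scalerDr; apply: coker_eq_refl.
by rewrite !scalerA mulrC; apply: coker_eq_refl.
Qed.

Lemma endo_eq_endo f h : endo f -> eeq f h -> endo h.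
Proof.
move=> [fW [fD fZ]] fh; split; [|split].
- move=> u v /fW fuv; apply: coker_eq_trans (fh v).
  exact: coker_eq_trans (coker_eq_sym (fh u)) fuv.
- move=> u v; apply: coker_eq_trans (coker_eq_sym (fh _)) _.
  exact: coker_eq_trans (fD u v) (coker_eqD (fh u) (fh v)).
- move=> r u; apply: coker_eq_trans (coker_eq_sym (fh _)) _.
  exact: coker_eq_trans (fZ r u) (coker_eqZ r (fh u)).
Qed.

Lemma endo_eq_comp f h c d :
  eeq f (st c) -> eeq h (st d) -> eeq (f \o h) (st (c * d)).
Proof.
move=> fc hd u /=; apply: coker_eq_trans (fc (h u)) _.
by rewrite /struct_map -scalerA; apply: coker_eqZ.
Qed.
Lemma endo_eq_add f h c d :
  eeq f (st c) -> eeq h (st d) -> eeq (fun u => f u + h u) (st (c + d)).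
Proof. by move=> fc hd u; rewrite /struct_map scalerDl; apply: coker_eqD. Qed.
Lemma endo_eq_zero : eeq (fun _ => 0) (st 0).
Proof. by move=> u; rewrite /struct_map scale0r; apply: coker_eq_refl. Qed.
Lemma endo_eq_id : eeq id (st 1).
Proof. by move=> u; rewrite /struct_map scale1r; apply: coker_eq_refl. Qed.

Lemma coker_endo_kills f u : endo f -> ceq u 0 -> ceq (f u) 0.
Proof.
move=> [fW [fD _]] /fW fu0; apply: coker_eq_trans fu0 _.
rewrite /coker_eq subr0; have := fD 0 0; rewrite addr0 /coker_eq => /im_mxN.
by rewrite opprB addrK.
Qed.

Lemma coker_endo_lincomb f r s u v :
  endo f -> ceq (f (r *: u + s *: v)) (r *: f u + s *: f v).
Proof.
move=> [_ [fD fZ]]; apply: coker_eq_trans (fD _ _) _.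
exact: coker_eqD (fZ r u) (fZ s v).
Qed.

Lemma coker_endo_relation f r s u v :
  endo f -> ceq (r *: u + s *: v) 0 -> ceq (r *: f u + s *: f v) 0.
Proof.
move=> f_endo /(coker_endo_kills f_endo) f0.
exact: coker_eq_trans (coker_eq_sym (coker_endo_lincomb r s u v f_endo)) f0.
Qed.

Lemma coker_endo_of_basis f c : endo f ->
  ceq (f (col2 1 0)) (c *: col2 1 0) -> ceq (f (col2 0 1)) (c *: col2 0 1) -> eeq f (st c).
Proof.
move=> f_endo fe1 fe2 u; rewrite /struct_map (col2_basis u).
apply: coker_eq_trans (coker_endo_lincomb _ _ _ _ f_endo) _.
rewrite scalerDr !scalerA ![c * _]mulrC -!scalerA.
exact: coker_eqD (coker_eqZ _ fe1) (coker_eqZ _ fe2).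
Qed.

Lemma coker_submod0 (M : 'cV[A]_2 -> Prop) : coker_submod g M -> M 0.
Proof. by case=> _ []. Qed.

Lemma coker_submodB (M : 'cV[A]_2 -> Prop) u v :
  coker_submod g M -> M u -> M v -> M (u - v).
Proof. by move=> [_ [_ [MD MZ]]] Mu Mv; rewrite -scaleN1r; apply/MD/MZ. Qed.

Section StructIso.
Hypothesis giso : End_struct_iso g.

Lemma coker_endoP f : endo f <-> exists c, eeq f (st c).
Proof.
split; first by case: giso => _ [_]; apply.
by move=> [c fc]; apply: endo_eq_endo (struct_map_endo c) (endo_eq_sym fc).
Qed.

Lemma struct_map_inj r s : eeq (st r) (st s) -> r = s.
Proof. by case: giso => _ [+ _]; apply. Qed.

Lemma endo_eq_struct_uniq f r s : eeq f (st r) -> eeq f (st s) -> r = s.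
Proof. by move=> fr fs; apply/struct_map_inj/(endo_eq_trans (endo_eq_sym fr)). Qed.

Definition endo_scalar (f : vfun A) : A := epsilon (inhabits 0) (fun c => eeq f (st c)).

Lemma endo_scalarP f : endo f -> eeq f (st (endo_scalar f)).
Proof. by move=> /coker_endoP; apply: epsilon_spec. Qed.

Lemma End_comm_of_struct_iso : End_comm g.
Proof.
move=> f h /coker_endoP [c fc] /coker_endoP [d hd].
apply: endo_eq_trans (endo_eq_comp fc hd) _; rewrite mulrC.
exact/endo_eq_sym/endo_eq_comp.
Qed.

Definition scalar_ideal (I : vfun A -> Prop) (r : A) : Prop := I (st r).
Definition endo_ideal (K : A -> Prop) (f : vfun A) : Prop := exists r, K r /\ eeq f (st r).

Lemma scalar_ideal_is_ideal I : End_ideal g I -> is_ideal (scalar_ideal I).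
Proof.
move=> [_ [Ieq [I0 [ID IM]]]]; split; [|split].
- exact: Ieq I0 endo_eq_zero.
- move=> u v Iu Iv; apply: Ieq (ID _ _ Iu Iv) _.
  exact: endo_eq_add (fun w => coker_eq_refl _) (fun w => coker_eq_refl _).
- move=> r u Iu; apply: Ieq (IM _ _ (struct_map_endo r) Iu).1 _.
  exact: endo_eq_comp (fun w => coker_eq_refl _) (fun w => coker_eq_refl _).
Qed.

Lemma End_ideal_idE I : End_ideal g I -> I id <-> scalar_ideal I 1.
Proof.
move=> [_ [Ieq _]]; split => I1; apply: Ieq I1 _; first exact: endo_eq_id.
exact: endo_eq_sym endo_eq_id.
Qed.

Lemma endo_ideal_is_End_ideal K : is_ideal K -> End_ideal g (endo_ideal K).
Proof.
move=> [K0 [KD KM]]; split; [|split; [|split; [|split]]].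
- by move=> f [r [_ fr]]; apply/coker_endoP; exists r.
- move=> f h [r [Kr fr]] fh; exists r; split => //.
  exact: endo_eq_trans (endo_eq_sym fh) fr.
- by exists 0; split => //; apply: endo_eq_zero.
- move=> f h [r [Kr fr]] [s [Ks hs]].
  by exists (r + s); split; [apply: KD | apply: endo_eq_add].
- move=> f h /coker_endoP [c fc] [r [Kr hr]]; split.
    by exists (c * r); split; [apply: KM | apply: endo_eq_comp].
  by exists (r * c); split; [rewrite mulrC; apply: KM | apply: endo_eq_comp].
Qed.

Lemma End_idealE I : End_ideal g I -> forall f, I f <-> endo_ideal (scalar_ideal I) f.
Proof.
move=> [Iendo [Ieq _]] f; split => [If | [r [Ir fr]]]; last exact: Ieq Ir (endo_eq_sym fr).
have [r fr] := (coker_endoP f).1 (Iendo f If).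
by exists r; split => //; apply: Ieq If fr.
Qed.

Lemma scalar_idealE K r : K r <-> scalar_ideal (endo_ideal K) r.
Proof.
split => [Kr | [s [Ks rs]]]; first by exists r; split => // u; apply: coker_eq_refl.
by rewrite (struct_map_inj rs).
Qed.

Lemma endo_ideal_maximal m : maximal_ideal m -> End_maximal_ideal g (endo_ideal m).
Proof.
move=> [idm [nm1 maxm]]; split; first exact: endo_ideal_is_End_ideal.
split=> [[r [mr idr]] | J idJ mJ nJ1 f Jf].
  by apply: nm1; rewrite (endo_eq_struct_uniq endo_eq_id idr).
have [r [Jr fr]] := (End_idealE idJ f).1 Jf.
exists r; split => //; apply: maxm Jr.
- exact: scalar_ideal_is_ideal.
- by move=> z /scalar_idealE /mJ.
- by move/(End_ideal_idE idJ).
Qed.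

Lemma scalar_ideal_maximal M : End_maximal_ideal g M -> maximal_ideal (scalar_ideal M).
Proof.
move=> [idM [nM1 maxM]]; split; first exact: scalar_ideal_is_ideal.
split=> [/(End_ideal_idE idM) // | K idK MK nK1 z Kz].
have idKe := endo_ideal_is_End_ideal idK.
apply: maxM (proj1 (scalar_idealE K z) Kz) => // [f | /(End_ideal_idE idKe)].
  by move=> /(End_idealE idM) [r [Mr fr]]; exists r; split => //; apply: MK.
by move/(scalar_idealE K 1).2.
Qed.

Lemma End_local_of_struct_iso : local_ring A -> End_local g.
Proof.
move=> [m [maxm uniq_m]]; exists (endo_ideal m); split; first exact: endo_ideal_maximal.
move=> M maxM f; have [idM _] := maxM.
rewrite (End_idealE idM); split=> [] [r [Mr fr]]; exists r; split => //.
  exact/(uniq_m _ (scalar_ideal_maximal maxM)).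
exact/(uniq_m _ (scalar_ideal_maximal maxM)).
Qed.

Lemma End_noetherian_of_struct_iso : noetherian_ring A -> End_noetherian g.
Proof.
move=> noethA I idI; have idIs := scalar_ideal_is_ideal idI.
have [s span_s] := noethA _ idIs.
exists (map st s); rewrite size_map.
have nth_st (i : 'I_(size s)) : nth (fun _ => 0) (map st s) i = st s`_i.
  by rewrite (nth_map 0).
split=> [i | f]; first by rewrite nth_st; apply: struct_map_endo.
have sum_st (d : 'I_(size s) -> A) u :
  ceq (\sum_(i < size s) st (d i) (nth (fun _ => 0) (map st s) i u))
      (st (\sum_(i < size s) d i * s`_i) u).
  under eq_bigr => i _ do rewrite nth_st /struct_map scalerA.
  rewrite /struct_map scaler_suml; exact: coker_eq_refl.
split=> [/(End_idealE idI) [r [Ir fr]] | [c [c_endo fc]]].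
  have [d r_d] := (span_s r).1 Ir; rewrite r_d in fr.
  exists (fun i => st (d i)); split=> [i | u]; first exact: struct_map_endo.
  exact: coker_eq_trans (fr u) (coker_eq_sym (sum_st d u)).
pose d i := endo_scalar (c i).
apply/(End_idealE idI); exists (\sum_(i < size s) d i * s`_i); split.
  by apply/span_s; exists d.
move=> u; apply: coker_eq_trans (fc u) _; apply: coker_eq_trans (sum_st d u).
apply: (big_ind2 (fun v w => ceq v w)) => [|v1 w1 v2 w2|i _]; first exact: coker_eq_refl.
  exact: coker_eqD.
exact: endo_scalarP.
Qed.

Lemma coker_nonzero : exists u, ~ ceq u 0.
Proof.
apply: NNPP => all0; have /eqP := @oner_neq0 A; apply.
apply: struct_map_inj => u; rewrite /struct_map scale1r scale0r.
by apply: NNPP => nu0; apply: all0; exists u.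
Qed.

Section Decomposition.
Variables M N : 'cV[A]_2 -> Prop.
Hypotheses (subM : coker_submod g M) (subN : coker_submod g N).
Hypothesis MN_span : forall u, exists m n, M m /\ N n /\ ceq u (m + n).
Hypothesis MN_disjoint : forall u, M u -> N u -> ceq u 0.

Lemma direct_sum_uniq m n m' n' :
  M m -> N n -> M m' -> N n' -> ceq (m + n) (m' + n') -> ceq m m'.
Proof.
move=> Mm Nn Mm' Nn' mn_m'n'; case: (subN) => Nsat _.
have Nmm' : N (m - m').
  apply: Nsat (coker_submodB subN Nn' Nn); rewrite /coker_eq.
  have -> : n' - n - (m - m') = - (m + n - (m' + n')).
    by rewrite opprB opprB opprD addrACA [n' + _]addrC [- n + _]addrC.
  exact: im_mxN.
by have := MN_disjoint (coker_submodB subM Mm Mm') Nmm'; rewrite /coker_eq subr0.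
Qed.

Definition direct_sum_proj (u : 'cV[A]_2) : 'cV[A]_2 :=
  epsilon (inhabits 0) (fun m => M m /\ exists n, N n /\ ceq u (m + n)).
Local Notation p := direct_sum_proj.

Lemma direct_sum_projP u : M (p u) /\ exists n, N n /\ ceq u (p u + n).
Proof.
have [m [n [Mm [Nn umn]]]] := MN_span u.
apply: (epsilon_spec (inhabits 0) (fun m => M m /\ exists n, N n /\ ceq u (m + n))).
by exists m; split => //; exists n.
Qed.

Lemma direct_sum_proj_eq u m n : M m -> N n -> ceq u (m + n) -> ceq (p u) m.
Proof.
move=> Mm Nn umn; have [Mpu [n' [Nn' upn']]] := direct_sum_projP u.
exact: direct_sum_uniq Mpu Nn' Mm Nn (coker_eq_trans (coker_eq_sym upn') umn).
Qed.

Lemma direct_sum_proj_endo : endo p.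
Proof.
have [[_ [_ [MD MZ]]] [_ [_ [ND NZ]]]] := (subM, subN).
split; [|split] => [u v uv | u v | r u].
- have [Mpv [n [Nn vpn]]] := direct_sum_projP v.
  exact: direct_sum_proj_eq Mpv Nn (coker_eq_trans uv vpn).
- have [Mpu [nu [Nnu upn]]] := direct_sum_projP u.
  have [Mpv [nv [Nnv vpn]]] := direct_sum_projP v.
  apply: direct_sum_proj_eq (MD _ _ Mpu Mpv) (ND _ _ Nnu Nnv) _.
  by rewrite addrACA; apply: coker_eqD.
- have [Mpu [n [Nn upn]]] := direct_sum_projP u.
  apply: direct_sum_proj_eq (MZ r _ Mpu) (NZ r _ Nn) _.
  by rewrite -scalerDr; apply: coker_eqZ.
Qed.

Lemma direct_sum_proj_idem u : ceq (p (p u)) (p u).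
Proof.
apply: direct_sum_proj_eq (direct_sum_projP u).1 (coker_submod0 subN) _.
by rewrite addr0; apply: coker_eq_refl.
Qed.

Lemma direct_sum_trivial :
  noetherian_ring A -> local_ring A -> coker_sub_zero g M \/ coker_sub_zero g N.
Proof.
move=> noethA localA; have := endo_scalarP direct_sum_proj_endo.
set c := endo_scalar p => pc.
have cc : c * c = c.
  apply: struct_map_inj; apply: endo_eq_trans (endo_eq_sym (endo_eq_comp pc pc)) _.
  exact: endo_eq_trans (fun u => direct_sum_proj_idem u) pc.
have [c0 | c1] := local_idempotent noethA localA cc; [left => m Mm | right => n Nn].
  have pm : ceq (p m) m.
    apply: direct_sum_proj_eq Mm (coker_submod0 subN) _.
    by rewrite addr0; apply: coker_eq_refl.
  apply: coker_eq_trans (coker_eq_sym pm) _.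
  by have := pc m; rewrite /struct_map c0 scale0r.
have pn : ceq (p n) 0.
  apply: direct_sum_proj_eq (coker_submod0 subM) Nn _.
  by rewrite add0r; apply: coker_eq_refl.
apply: coker_eq_trans pn.
by have := pc n; rewrite /struct_map c1 scale1r; apply: coker_eq_sym.
Qed.

End Decomposition.

Lemma coker_indecomposable_of_struct_iso :
  noetherian_ring A -> local_ring A -> coker_indecomposable g.
Proof.
move=> noethA localA; split; first exact: coker_nonzero.
move=> M N subM subN MN_span MN_disjoint.
exact: direct_sum_trivial.
Qed.

Lemma End_conclusions_of_struct_iso :
  noetherian_ring A -> local_ring A -> End_conclusions g.
Proof.
move=> noethA localA; split => //; split; first exact: End_comm_of_struct_iso.
split; first exact: End_noetherian_of_struct_iso.
split; first exact: End_local_of_struct_iso.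
exact: coker_indecomposable_of_struct_iso.
Qed.

End StructIso.
End Cokernel.

Section ExactPair.
Variables (A : comRingType) (x y a : A).
Hypothesis xy_reg : regular_exact_pair x y.
Hypothesis a_reg : weakly_regular_quot2 a x y.
Local Notation g := (gamma_mx x y a).

Lemma ann_x_pid z : z * x = 0 -> pid y z.
Proof. by case: xy_reg => [[_ [_ [+ _]]] _] => /(_ z) []. Qed.
Lemma ann_y_pid z : z * y = 0 -> pid x z.
Proof. by case: xy_reg => [[_ [_ [_ +]]] _] => /(_ z) []. Qed.
Lemma pid_xy_eq0 z : pid x z -> pid y z -> z = 0.
Proof. by case: xy_reg => _; apply. Qed.

Lemma gamma_imP p q :
  im_mx g (col2 p q) <-> exists w1 w2, p = x * w1 + a * w2 /\ q = y * w2.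
Proof.
split=> [[w] | [w1 [w2 [-> ->]]]]; last first.
  by exists (col2 w1 w2); rewrite mul_mx22_col2 mul0r add0r.
rewrite (col2E w) mul_mx22_col2 => /col2_inj [-> ->].
by exists (w 0 0), (w 1 0); rewrite mul0r add0r.
Qed.

Lemma gamma_faithful c : im_mx g (col2 c 0) -> im_mx g (col2 0 c) -> c = 0.
Proof.
move=> /gamma_imP [w1 [w2 [c_w yw2]]] /gamma_imP [v1 [v2 [_ c_v]]].
have [t w2_t] : pid x w2 by apply: ann_y_pid; rewrite mulrC -yw2.
apply: pid_xy_eq0; first by exists (w1 + a * t); ring: c_w w2_t.
by exists v2; rewrite c_v mulrC.
Qed.

(* [ring: H] only uses hypotheses whose left-hand side is a monomial. *)
Lemma eq_lincomb (k l r el er : A) : el = er -> l - r = k * (el - er) -> l = r.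
Proof. by move=> eq_e lr; apply/eqP; rewrite -subr_eq0 lr eq_e subrr mulr0. Qed.

Lemma gamma_endo_scalar p q r s :
  im_mx g (col2 (x * p) (x * q)) -> im_mx g (col2 (a * p + y * r) (a * q + y * s)) ->
  exists c, im_mx g (col2 (p - c) q) /\ im_mx g (col2 r (s - c)).
Proof.
move=> /gamma_imP [w1 [w2 [_ xq]]] /gamma_imP [v1 [v2 [ap_yr aq_ys]]].
have [q' q_y] : pid y q.
  apply/ann_x_pid/pid_xy_eq0; first by exists q; rewrite mulrC.
  by exists w2; rewrite mulrC xq mulrC.
subst q.
have [u u_x] : pid x (a * q' + s - v2).
  by apply: ann_y_pid; apply: (eq_lincomb (k := 1) aq_ys); ring.
have v2_E : v2 = a * q' + s - u * x by rewrite -u_x; ring.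
subst v2.
have [al [be p_xy]] : ideal2 x y (p - a * q' - s).
  by apply: a_reg; exists (v1 - a * u), (- r); apply: (eq_lincomb (k := 1) ap_yr); ring.
have {p_xy} p_E : p = a * q' + s + al * x + be * y by rewrite -addrA -p_xy; ring.
subst p.
have [rho r_x] : pid x (a * be + r).
  apply/ann_y_pid/pid_xy_eq0; last by exists (a * be + r).
  by exists (v1 - a * u - a * al); apply: (eq_lincomb (k := 1) ap_yr); ring.
have r_E : r = rho * x - a * be by rewrite -r_x; ring.
subst r.
exists (s + be * y); split; apply/gamma_imP.
  by exists al, q'; split; ring.
by exists rho, (- be); split; ring.
Qed.

Lemma gamma_struct_iso : End_struct_iso g.
Proof.
split; first exact: struct_map_endo.
split=> [r s rs | f f_endo].
  apply/eqP; rewrite -subr_eq0; apply/eqP/gamma_faithful.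
    by have := rs (col2 1 0); rewrite /coker_eq /struct_map !col2Z col2B !mulr1 !mulr0 subr0.
  by have := rs (col2 0 1); rewrite /coker_eq /struct_map !col2Z col2B !mulr1 !mulr0 subr0.
have [fe1 fe2] := (col2E (f (col2 1 0)), col2E (f (col2 0 1))).
set p := f _ 0 0 in fe1; set q := f _ 1 0 in fe1.
set r := f _ 0 0 in fe2; set s := f _ 1 0 in fe2.
have rel u v : coker_eq g (u *: col2 1 0 + v *: col2 0 1) 0 ->
    im_mx g (col2 (u * p + v * r) (u * q + v * s)).
  move=> /(coker_endo_relation f_endo).
  by rewrite fe1 fe2 /coker_eq subr0 !col2Z col2D.
have rel_x : coker_eq g (x *: col2 1 0 + 0 *: col2 0 1) 0.
  rewrite /coker_eq subr0 !col2Z col2D; apply/gamma_imP.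
  by exists 1, 0; split; ring.
have rel_ay : coker_eq g (a *: col2 1 0 + y *: col2 0 1) 0.
  rewrite /coker_eq subr0 !col2Z col2D; apply/gamma_imP.
  by exists 0, 1; split; ring.
have := rel _ _ rel_x; rewrite !mul0r !addr0 => /gamma_endo_scalar /(_ (rel _ _ rel_ay)).
move=> [c [pc rs_c]]; exists c; apply: coker_endo_of_basis => //.
  by rewrite fe1 /coker_eq col2Z col2B mulr1 mulr0 subr0.
by rewrite fe2 /coker_eq col2Z col2B mulr1 mulr0 subr0.
Qed.

End ExactPair.

Lemma regular_exact_pairC (A : comRingType) (x y : A) :
  regular_exact_pair x y -> regular_exact_pair y x.
Proof. by move=> [[nux [nuy [annx anny]]] xy0]; do !split => //; move=> z /xy0; apply. Qed.

Lemma weakly_regular_quot2_swap (A : comRingType) (a x y : A) :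
  weakly_regular_quot2 a x y -> weakly_regular_quot2 (- a) y x.
Proof.
move=> a_reg b [r [s ab]].
have [r' [s' b_xy]] : ideal2 x y b.
  by apply: a_reg; exists (- s), (- r); rewrite !mulNr -opprD addrC -ab mulNr opprK.
by exists s', r'; rewrite b_xy addrC.
Qed.

Lemma eta_mxE (A : comRingType) (x y a : A) : eta_mx x y a = gamma_mx y x (- a).
Proof. by []. Qed.

Theorem theorem4p5 (A : comRingType) (x y a : A) :
  noetherian_ring A -> local_ring A ->
  regular_exact_pair x y ->
  weakly_regular_quot2 a x y ->
  End_conclusions (gamma_mx x y a) /\ End_conclusions (eta_mx x y a).
Proof.
move=> noethA localA xy_reg a_reg.
split; apply: End_conclusions_of_struct_iso => //; first exact: gamma_struct_iso.
rewrite eta_mxE; apply: gamma_struct_iso.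
  exact: regular_exact_pairC.
exact: weakly_regular_quot2_swap.
Qed.
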